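(* Let $\mathscr N$ be a chemical reaction network. Let $p\ge2$ be the length of its finest independent decomposition and $q\ge2$ the length of its finest incidence independent decomposition. Then the number of independent decompositions of $\mathscr N$ is the Bell number $B_p$, and the number of incidence independent decompositions of $\mathscr N$ is $B_q$. Here the Bell numbers are defined by $B_0=1$ and $$B_p=\sum_{k=1}^{p}\binom{p-1}{k-1}B_{p-k},$$ i.e., $B_p$ is the number of partitions of a $p$-element set.
   Context: A chemical reaction network (CRN) $\mathscr N=(\mathscr S,\mathscr C,\mathscr R)$ consists of: - a finite set $\mathscr S$ of species; - a finite set $\mathscr C\subseteq\mathbb R^{\mathscr S}_{\ge0}$ of complexes; - a set $\mathscr R\subseteq\mathscr C\times\mathscr C$ of reactions, with no reaction $y\to y$ and every complex occurring in some reaction. A decomposition of $\mathscr N$ is the set of subnetworks $\mathscr N_1,\ldots,\mathscr N_k$ induced by a partition $\{\mathscr R_1,\ldots,\mathscr R_k\}$ of $\mathscr R$. Its length is $k$. The trivial decomposition ($k=1$) is counted. Let $S$ be the stoichiometric subspace $\operatorname{span}\{y'-y: y\to y'\in\mathscr R\}$, and $S_i$ the analogous subspace of $\mathscr N_i$. The decomposition is independent if $S=S_1\oplus\cdots\oplus S_k$. The decomposition is incidence independent if $n-l=\sum_i(n_i-l_i)$, where $n$ and $l$ are the numbers of complexes and of linkage classes (connected components of the underlying undirected graph) of $\mathscr N$, and $n_i$ and $l_i$ are those of $\mathscr N_i$. The finest independent (resp. incidence independent) decomposition is the unique independent (resp. incidence independent) decomposition that has no independent (resp. incidence independent) proper refinement.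 A refinement of a decomposition induced by $\{\mathscr R_i\}$ is one induced by a partition each of whose blocks lies in some $\mathscr R_i$. *)

From HB Require Import structures.
From mathcomp Require Import all_boot all_order all_algebra.
Set Implicit Arguments. Unset Strict Implicit. Unset Printing Implicit Defensive.
Import Order.TTheory GRing.Theory Num.Theory.
Local Open Scope ring_scope.

(* A chemical reaction network with species 'I_ns, complexes indexed by 'I_nc
   (comp k : 'rV[R]_ns is the k-th complex, a vector in R^S_{>=0}),
   reactions indexed by 'I_nr (rxn i = (source, product) complex indices). *)

Definition is_crn (R : realFieldType) (ns nc nr : nat)
  (comp : 'I_nc -> 'rV[R]_ns) (rxn : 'I_nr -> 'I_nc * 'I_nc) : Prop :=
  [/\ (forall k j, 0 <= comp k 0 j),
      injective comp,                           (* C is a set of complexes *)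
      injective rxn,                            (* R is a set of reactions *)
      (forall i, (rxn i).1 != (rxn i).2)
    & (forall k, exists i, k = (rxn i).1 \/ k = (rxn i).2) ].

Section CRN.
Variables (R : realFieldType) (ns nc nr : nat).
Variables (comp : 'I_nc -> 'rV[R]_ns) (rxn : 'I_nr -> 'I_nc * 'I_nc).

(* Rows of this matrix span the stoichiometric subspace of the subnetwork
   with reaction set A: span { y' - y : (y -> y') in A }. *)
Definition stoich_mx (A : {set 'I_nr}) : 'M[R]_(nr, ns) :=
  \matrix_(i < nr) (if i \in A then comp (rxn i).2 - comp (rxn i).1 else 0).

(* The stoichiometric subspace itself (canonical square representative). *)
Definition stoich_space (A : {set 'I_nr}) : 'M[R]_ns := <<stoich_mx A>>%MS.

Definition decomposition (P : {set {set 'I_nr}}) : bool :=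
  partition P [set: 'I_nr].

Definition independent (P : {set {set 'I_nr}}) : bool :=
  (stoich_space [set: 'I_nr] == \sum_(B in P) stoich_space B)%MS
  && mxdirect (\sum_(B in P) stoich_space B).

Definition complexes_of (A : {set 'I_nr}) : {set 'I_nc} :=
  [set k | [exists i in A, (k == (rxn i).1) || (k == (rxn i).2)]].

Definition link_rel (A : {set 'I_nr}) : rel 'I_nc :=
  fun k k' => [exists i in A, (rxn i == (k, k')) || (rxn i == (k', k))].

Definition n_cx (A : {set 'I_nr}) : nat := #|complexes_of A|.
Definition n_lc (A : {set 'I_nr}) : nat :=
  n_comp (connect (link_rel A)) (complexes_of A).

Definition incidence_independent (P : {set {set 'I_nr}}) : bool :=
  (n_cx [set: 'I_nr] - n_lc [set: 'I_nr] ==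
   \sum_(B in P) (n_cx B - n_lc B))%N.

Definition refines (Q P : {set {set 'I_nr}}) : bool :=
  [forall B in Q, [exists C in P, B \subset C]].

Definition finest (prop : {set {set 'I_nr}} -> bool) (P : {set {set 'I_nr}}) : Prop :=
  [/\ decomposition P, prop P &
      forall Q, decomposition Q -> prop Q -> refines Q P -> Q = P].

Definition num_decomps (prop : {set {set 'I_nr}} -> bool) : nat :=
  #|[set P : {set {set 'I_nr}} | decomposition P & prop P]|.

End CRN.

Fixpoint bells (n : nat) : seq nat :=
  match n with
  | 0 => [:: 1%N]
  | p.+1 => let s := bells p in
            rcons s (\sum_(j < p.+1) 'C(p, j) * nth 0%N s (p - j))%N
  end.
Definition bell (n : nat) : nat := nth 0%N (bells n) n.

From HB Require Import structures.
From mathcomp Require Import all_boot all_order all_algebra.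
From mathcomp Require Import zify.
Set Implicit Arguments. Unset Strict Implicit. Unset Printing Implicit Defensive.
Import Order.TTheory GRing.Theory Num.Theory.

(* Both notions are instances of one linear-algebraic condition.  Attach to
   each reaction i a vector v i and let rk A be the rank of {v i | i in A}; a
   decomposition P is rank additive when the rank of all the vectors is
   sum_{B in P} rk B.
   - With v i = y' - y (stoichiometric vectors) the block subspaces always
     span S, so rank additivity is exactly independence.
   - With v i = e_y' - e_y (incidence vectors) rk A = n_A - l_A, since the left
     kernel of the incidence matrix consists of the functions constant on the
     linkage classes; so rank additivity is exactly incidence independence.
   Rank-additive decompositions are closed under coarsening and under common
   refinement, hence they are precisely the coarsenings of the finest one, Pf.
   Coarsenings of Pf correspond to partitions of the set of blocks of Pf, and
   a p-element set has B_p partitions (classify by the block of one element). *)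

Lemma size_bells n : size (bells n) = n.+1.
Proof. by elim: n => //= n IHn; rewrite size_rcons IHn. Qed.

Lemma nth_bells n i : i <= n -> nth 0 (bells n) i = bell i.
Proof.
elim: n i => [|n IHn] i; first by rewrite leqn0 => /eqP ->.
rewrite leq_eqVlt => /orP[/eqP -> //|lt_in].
by rewrite /= nth_rcons size_bells lt_in IHn.
Qed.

Lemma bellS n : bell n.+1 = \sum_(j < n.+1) 'C(n, j) * bell (n - j).
Proof.
rewrite /bell /= nth_rcons size_bells ltnn eqxx.
by apply: eq_bigr => j _; rewrite nth_bells // leq_subr.
Qed.

Section CountPartitions.
Variable T : finType.
Implicit Types D S Y : {set T}.

Definition parts D : {set {set {set T}}} := [set P | partition P D].

Lemma card_parts0 : #|parts set0| = 1.
Proof.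
rewrite (_ : parts set0 = [set set0]) ?cards1 //.
by apply/setP => P; rewrite !inE partition_set0.
Qed.

Lemma sum_powerset_by_card S (f : nat -> nat) :
  \sum_(Y in powerset S) f #|Y| = \sum_(j < #|S|.+1) 'C(#|S|, j) * f j.
Proof.
under [RHS]eq_bigr => j _.
  rewrite -cards_draws -sum_nat_const.
  under eq_bigl => Y do rewrite inE.
over.
rewrite (exchange_big_dep (mem (powerset S))) /=; last first.
  by move=> j Y _ /andP[]; rewrite powersetE.
apply: eq_bigr => Y; rewrite powersetE => sYS.
have ltY : #|Y| < #|S|.+1 by rewrite ltnS subset_leq_card.
rewrite (big_pred1 (Ordinal ltY)) // => j /=.
rewrite sYS /=; apply/eqP/eqP => [e|->] //; exact: val_inj.
Qed.

Lemma card_parts_block D Y x : x \in D -> Y \subset D :\ x ->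
  #|[set P | partition P D & pblock P x == x |: Y]| = #|parts (D :\ x :\: Y)|.
Proof.
move=> xD sYD; set B := x |: Y; set D' := D :\ x :\: Y.
have xB : x \in B by rewrite setU11.
have BD' : B :|: D' = D.
  apply/setP => k; rewrite !inE; have := subsetP sYD k; rewrite !inE.
  case: eqP => [->|_] /=; first by rewrite xD; case: (x \in Y).
  by case: (k \in Y) => //= /(_ isT) ->.
have disjBD' : [disjoint B & D'].
  rewrite -setI_eq0; apply/eqP/setP => k; rewrite !inE.
  by case: (k == x); case: (k \in Y).
have DB : D :\: B = D'.
  by apply/setP => k; rewrite !inE; case: (k == x); case: (k \in Y).
have notB P : partition P D' -> B \notin P.
  move=> pP; apply/negP => /(partitionS pP) /subsetP /(_ x xB).
  by rewrite !inE eqxx andbF.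
rewrite -(card_in_imset (f := fun P' => B |: P') (D := parts D')); last first.
  move=> P1 P2; rewrite !inE => p1 p2 e12.
  by rewrite -(setU1K (notB _ p1)) e12 setU1K // notB.
apply: eq_card => P; rewrite !inE; apply/andP/imsetP.
  case=> pP /eqP pbx.
  have BP : B \in P by rewrite -pbx pblock_mem ?(cover_partition pP).
  by exists (P :\ B); rewrite ?setD1K // inE -DB; apply: partitionD1.
case=> P'; rewrite inE => pP' ->.
have pU : partition (B |: P') D.
  by rewrite -BD'; apply: partitionU1 => //; apply/set0Pn; exists x.
split => //; apply/eqP; apply: def_pblock; rewrite ?setU11 //.
exact: partition_trivIset pU.
Qed.

Lemma card_parts_by_block D x : x \in D ->
  #|parts D| = \sum_(Y in powerset (D :\ x)) #|parts (D :\ x :\: Y)|.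
Proof.
move=> xD; rewrite -sum1_card.
rewrite (partition_big (fun P => pblock P x :\ x) (mem (powerset (D :\ x)))) /=.
  apply: eq_bigr => Y; rewrite powersetE => sYD.
  rewrite -card_parts_block // -sum1_card; apply: eq_bigl => P; rewrite !inE.
  case pP: (partition P D) => //=.
  have xb : x \in pblock P x by rewrite mem_pblock (cover_partition pP).
  have xY : x \notin Y by apply/negP => /(subsetP sYD); rewrite !inE eqxx.
  by apply/eqP/eqP => [<-|->]; [rewrite setD1K|rewrite setU1K].
move=> P; rewrite !inE => pP; apply: setSD.
by apply: (partitionS pP); rewrite pblock_mem ?(cover_partition pP).
Qed.

Lemma card_parts D : #|parts D| = bell #|D|.
Proof.
have [n] := ubnP #|D|; elim: n D => // n IHn D; rewrite ltnS => leDn.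
have [->|[x xD]] := set_0Vmem D; first by rewrite card_parts0 cards0.
have cardD : #|D| = #|D :\ x|.+1 by rewrite (cardsD1 x D) xD.
rewrite (card_parts_by_block xD) cardD bellS.
rewrite -(sum_powerset_by_card _ (fun j => bell (#|D :\ x| - j))).
apply: eq_bigr => Y; rewrite powersetE => sYD.
rewrite IHn; first by rewrite cardsD (setIidPr sYD).
apply: leq_ltn_trans (subset_leq_card (subsetDl _ Y)) _.
by rewrite -ltnS -cardD.
Qed.

End CountPartitions.

Section PartitionLattice.
Variable nr : nat.
Implicit Types P Q : {set {set 'I_nr}}.

(* The pairs of blocks of P and Q that meet; their intersections are the
   blocks of the common refinement of P and Q. *)
Definition meet_pairs P Q : {set {set 'I_nr} * {set 'I_nr}} :=
  [set x | [&& x.1 \in P, x.2 \in Q & x.1 :&: x.2 != set0]].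

Definition meet P Q : {set {set 'I_nr}} :=
  [set x.1 :&: x.2 | x in meet_pairs P Q].

Section Meet.
Variables P Q : {set {set 'I_nr}}.
Hypotheses (decP : decomposition P) (decQ : decomposition Q).

Lemma meet_pairs_pblock x k : x \in meet_pairs P Q -> k \in x.1 :&: x.2 ->
  x = (pblock P k, pblock Q k).
Proof.
rewrite inE => /and3P[xP xQ _] /setIP[k1 k2].
by rewrite (def_pblock (partition_trivIset decP) xP k1)
           (def_pblock (partition_trivIset decQ) xQ k2) -surjective_pairing.
Qed.

Lemma meet_inj : {in meet_pairs P Q &, injective (fun x => x.1 :&: x.2)}.
Proof.
move=> x y xD yD exy; have := xD; rewrite inE => /and3P[_ _ /set0Pn[k kx]].
by rewrite (meet_pairs_pblock xD kx) (meet_pairs_pblock (k := k) yD) // -exy.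
Qed.

Lemma meet_decomposition : decomposition (meet P Q).
Proof.
have cP := cover_partition decP; have cQ := cover_partition decQ.
apply/and3P; split.
- rewrite eqEsubset subsetT; apply/subsetP => k _; apply/bigcupP.
  have kP : k \in cover P by rewrite cP inE.
  have kQ : k \in cover Q by rewrite cQ inE.
  have kPQ : k \in pblock P k :&: pblock Q k by rewrite inE !mem_pblock kP kQ.
  exists (pblock P k :&: pblock Q k) => //; apply/imsetP.
  exists (pblock P k, pblock Q k) => //.
  by rewrite inE /= !pblock_mem //=; apply/set0Pn; exists k.
- apply/trivIsetP => _ _ /imsetP[x xD ->] /imsetP[y yD ->] nexy.
  rewrite -setI_eq0; apply: contraR nexy => /set0Pn[k /setIP[kx ky]].
  by rewrite (meet_pairs_pblock xD kx) (meet_pairs_pblock yD ky).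
- apply/negP => /imsetP[x]; rewrite inE => /and3P[_ _ nx0] x0.
  by rewrite -x0 eqxx in nx0.
Qed.

Lemma meet_refines_l : refines (meet P Q) P.
Proof.
apply/forall_inP => B /imsetP[x]; rewrite inE => /and3P[xP _ _] ->.
by apply/exists_inP; exists x.1; rewrite ?subsetIl.
Qed.

Lemma meet_refines_r : refines (meet P Q) Q.
Proof.
apply/forall_inP => B /imsetP[x]; rewrite inE => /and3P[_ xQ _] ->.
by apply/exists_inP; exists x.2; rewrite ?subsetIr.
Qed.

End Meet.

Definition blocks_in P (C : {set 'I_nr}) : {set {set 'I_nr}} :=
  [set B in P | B \subset C].

Section Coarsenings.
Variable P : {set {set 'I_nr}}.
Hypothesis decP : decomposition P.

Lemma blocks_in_cover (X : {set {set 'I_nr}}) :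
  X \subset P -> blocks_in P (cover X) = X.
Proof.
move=> sXP; apply/setP => B; rewrite inE; apply/andP/idP; last first.
  by move=> BX; split; [apply: (subsetP sXP) | apply: bigcup_sup].
case=> BP sBX; have /set0Pn[i iB] := partition_neq0 decP BP.
have /bigcupP[B' B'X iB'] := subsetP sBX i iB.
have tP := partition_trivIset decP.
by rewrite -(def_pblock tP BP iB) (def_pblock tP (subsetP sXP _ B'X) iB').
Qed.

Lemma cover_blocks_in Q C : decomposition Q -> refines P Q -> C \in Q ->
  cover (blocks_in P C) = C.
Proof.
move=> decQ /forall_inP PQ CQ; apply/setP => i; apply/bigcupP/idP.
  by case=> B; rewrite inE => /andP[_ /subsetP sBC] /sBC.
move=> iC; have iP : i \in cover P by rewrite (cover_partition decP) inE.
exists (pblock P i); rewrite ?mem_pblock // inE pblock_mem //=.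
have /exists_inP[C' C'Q sBC'] := PQ _ (pblock_mem iP).
have iC' : i \in C' by apply: (subsetP sBC'); rewrite mem_pblock.
have tQ := partition_trivIset decQ.
by rewrite -(def_pblock tQ CQ iC) (def_pblock tQ C'Q iC').
Qed.

Lemma partition_blocks_in Q : decomposition Q -> refines P Q ->
  partition (blocks_in P @: Q) P.
Proof.
move=> decQ PQ; have tQ := partition_trivIset decQ; apply/and3P; split.
- rewrite eqEsubset; apply/andP; split; apply/subsetP => B.
    by move=> /bigcupP[_ /imsetP[C _ ->]]; rewrite inE => /andP[].
  move=> BP; have /exists_inP[C CQ sBC] := forall_inP PQ _ BP.
  by apply/bigcupP; exists (blocks_in P C); rewrite ?imset_f // inE BP.
- apply/trivIsetP => _ _ /imsetP[C1 C1Q ->] /imsetP[C2 C2Q ->] neC.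
  rewrite -setI_eq0; apply: contraR neC => /set0Pn[B].
  rewrite !inE => /andP[/andP[BP /subsetP sB1] /andP[_ /subsetP sB2]].
  have /set0Pn[i iB] := partition_neq0 decP BP.
  by rewrite -(def_pblock tQ C1Q (sB1 i iB)) (def_pblock tQ C2Q (sB2 i iB)).
- apply/negP => /imsetP[C CQ C0].
  have := cover_blocks_in decQ PQ CQ; rewrite -C0 /cover big_set0 => eC.
  by have := partition_neq0 decQ CQ; rewrite -eC eqxx.
Qed.

Lemma coarsening_cover Pi : partition Pi P ->
  decomposition (cover @: Pi) /\ refines P (cover @: Pi).
Proof.
move=> pPi; split; first by case: (partition_partition decP pPi).
apply/forall_inP => B; rewrite -(cover_partition pPi) => /bigcupP[X XPi BX].
by apply/exists_inP; exists (cover X); [apply: imset_f | apply: bigcup_sup].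
Qed.

Lemma card_coarsenings :
  #|[set Q | decomposition Q & refines P Q]| = #|parts P|.
Proof.
have blocksK Pi : partition Pi P -> blocks_in P @: (cover @: Pi) = Pi.
  move=> pPi; rewrite -imset_comp (eq_in_imset (g := id)) ?imset_id // => X XPi.
  exact/blocks_in_cover/(partitionS pPi).
have inj_cover :
    {in parts P &, injective (fun Pi : {set {set {set 'I_nr}}} => cover @: Pi)}.
  by move=> P1 P2; rewrite !inE => p1 p2 e12; rewrite -(blocksK _ p1) e12 blocksK.
rewrite -(card_in_imset inj_cover); apply: eq_card => Q; rewrite inE.
apply/andP/imsetP => [[decQ PQ]|[Pi]]; last first.
  by rewrite inE => /coarsening_cover[decQ PQ] ->.
exists (blocks_in P @: Q); first by rewrite inE partition_blocks_in.
rewrite -imset_comp (eq_in_imset (g := id)) ?imset_id // => C CQ.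
exact: cover_blocks_in decQ PQ CQ.
Qed.

End Coarsenings.
End PartitionLattice.

Local Open Scope ring_scope.

Section RankAdditivity.
Variables (F : fieldType) (nr m : nat) (v : 'I_nr -> 'rV[F]_m).
Implicit Types (A X : {set 'I_nr}) (P Q : {set {set 'I_nr}}).

(* The matrix with rows v i for i in A and 0 elsewhere: its row space is
   the span of {v i | i in A}. *)
Definition span_mx A : 'M[F]_(nr, m) :=
  \matrix_(i < nr) (if i \in A then v i else 0).

Definition rk A : nat := \rank (span_mx A).

Definition rank_additive P : bool :=
  (\sum_(B in P) rk B == rk [set: 'I_nr])%N.

Lemma row_span_mx A i : row i (span_mx A) = if i \in A then v i else 0.
Proof. by rewrite rowK. Qed.

Lemma rk0 : rk set0 = 0%N.
Proof.
rewrite /rk; suff -> : span_mx set0 = 0 by rewrite mxrank0.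
by apply/row_matrixP => i; rewrite row_span_mx inE row0.
Qed.

Lemma span_mx_in A i : i \in A -> (v i <= span_mx A)%MS.
Proof.
move=> iA; have <- : row i (span_mx A) = v i by rewrite row_span_mx iA.
exact: row_sub.
Qed.

Lemma span_mxS A X : A \subset X -> (span_mx A <= span_mx X)%MS.
Proof.
move=> /subsetP sAX; apply/row_subP => i; rewrite row_span_mx.
by case: ifP => iA; [apply/span_mx_in/sAX | rewrite sub0mx].
Qed.

Lemma span_mx_cover X P :
  X \subset cover P -> (span_mx X <= \sum_(B in P) <<span_mx B>>)%MS.
Proof.
move=> /subsetP sXP; apply/row_subP => i; rewrite row_span_mx.
case: ifP => iX; last by rewrite sub0mx.
have /bigcupP[B BP iB] := sXP _ iX.
by apply: (sumsmx_sup B) => //; rewrite genmxE span_mx_in.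
Qed.

Lemma rank_additive_mxdirect P : decomposition P -> rank_additive P ->
  mxdirect (\sum_(B in P) <<span_mx B>>).
Proof.
move=> decP /eqP addP; rewrite mxdirectEgeq /=.
under eq_bigr do rewrite mxrank_gen.
rewrite addP; apply/mxrankS/span_mx_cover.
by rewrite (cover_partition decP).
Qed.

Lemma rk_split P X : decomposition P -> rank_additive P ->
  rk X = (\sum_(C in P) rk (X :&: C))%N.
Proof.
move=> decP addP; have dirP := rank_additive_mxdirect decP addP.
have dirX : mxdirect (\sum_(C in P) <<span_mx (X :&: C)>>).
  apply/mxdirect_sumsP => C CP; move/mxdirect_sumsP: dirP => /(_ C CP) capC0.
  apply/eqP; rewrite -submx0 -[X in (_ <= X)%MS]capC0; apply: capmxS.
    by rewrite !genmxE span_mxS ?subsetIr.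
  by apply: sumsmxS => D _; rewrite !genmxE span_mxS ?subsetIr.
have eqX : (span_mx X == \sum_(C in P) <<span_mx (X :&: C)>>)%MS.
  apply/andP; split; last first.
    by apply/sumsmx_subP => C _; rewrite genmxE span_mxS ?subsetIl.
  apply/row_subP => i; rewrite row_span_mx.
  case: ifP => iX; last by rewrite sub0mx.
  have : i \in cover P by rewrite (cover_partition decP) inE.
  move=> /bigcupP[C CP iC]; apply: (sumsmx_sup C) => //.
  by rewrite genmxE span_mx_in // inE iX iC.
rewrite /rk (eqmx_rank eqX); move/mxdirectP: dirX => /= ->.
by apply: eq_bigr => C _; rewrite mxrank_gen.
Qed.

Lemma rank_additive_coarsen P Q : decomposition P -> rank_additive P ->
  decomposition Q -> refines P Q -> rank_additive Q.
Proof.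
move=> decP addP decQ /forall_inP PQ; rewrite /rank_additive -(eqP addP).
rewrite (eq_bigr (fun C => \sum_(B in P) rk (C :&: B))%N); last first.
  by move=> C _; apply: rk_split.
rewrite exchange_big /=; apply/eqP/eq_bigr => B BP.
have /exists_inP[C0 C0Q sBC0] := PQ B BP.
rewrite (bigD1 C0) //= (setIidPr sBC0) big1 ?addn0 // => C /andP[CQ neC].
have /trivIsetP /(_ C C0 CQ C0Q neC) /disjoint_setI0 CC0 :=
  partition_trivIset decQ.
suff -> : C :&: B = set0 by rewrite rk0.
by apply/eqP; rewrite -subset0 -CC0 setIS.
Qed.

Lemma rank_additive_meet P Q : decomposition P -> rank_additive P ->
  decomposition Q -> rank_additive Q -> rank_additive (meet P Q).
Proof.
move=> decP addP decQ addQ.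
rewrite /rank_additive big_imset /=; last exact: meet_inj.
rewrite -(eqP addP) (eq_bigr (fun B => \sum_(C in Q) rk (B :&: C))%N); last first.
  by move=> B _; apply: rk_split.
rewrite pair_big /=; apply/eqP.
rewrite [RHS](bigID (fun x => x.1 :&: x.2 == set0)) /=.
rewrite [X in (X + _)%N]big1 ?add0n => [|x /andP[_ /eqP ->]]; last exact: rk0.
by apply: eq_bigl => x; rewrite inE andbA.
Qed.

Lemma rank_additive_iff_coarser Pf Q : finest rank_additive Pf ->
  decomposition Q -> rank_additive Q = refines Pf Q.
Proof.
case=> decPf addPf minPf decQ; apply/idP/idP; last exact: rank_additive_coarsen.
move=> addQ; have := minPf _ (meet_decomposition decPf decQ).
move=> /(_ (rank_additive_meet decPf addPf decQ addQ) (meet_refines_l _ _)) <-.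
exact: meet_refines_r.
Qed.

End RankAdditivity.

Lemma connect_isolated (T : finType) (r : rel T) x y :
  (forall z, ~~ r x z) -> connect r x y -> y = x.
Proof.
move=> isox /connectP[[|z p] /= rp ->] //.
by move: rp; rewrite (negbTE (isox z)).
Qed.

Lemma sum_mul_delta (F : fieldType) n (f : 'I_n -> F) t :
  \sum_(j < n) f j * (j == t)%:R = f t.
Proof.
rewrite (bigD1 t) //= eqxx mulr1 big1 ?addr0 // => j /negbTE ->.
by rewrite mulr0.
Qed.

Section IncidenceRank.
Variables (F : fieldType) (nc nr : nat) (rxn : 'I_nr -> 'I_nc * 'I_nc).

Definition incidence_vec (i : 'I_nr) : 'rV[F]_nc :=
  \row_j ((j == (rxn i).2)%:R - (j == (rxn i).1)%:R).

Variable A : {set 'I_nr}.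
Local Notation M := (span_mx incidence_vec A).
Local Notation lnk := (link_rel rxn A).

Lemma incidence_mulmx (u : 'rV[F]_nc) i :
  (u *m M^T) 0 i = if i \in A then u 0 (rxn i).2 - u 0 (rxn i).1 else 0.
Proof.
rewrite !mxE; under eq_bigr do rewrite !mxE.
case: ifP => _; last by rewrite big1 // => j _; rewrite mxE mulr0.
under eq_bigr do rewrite mxE mulrBr.
by rewrite sumrB !sum_mul_delta.
Qed.

Lemma link_sym : connect_sym lnk.
Proof.
apply: sym_connect_sym => x y.
by apply/exists_inP/exists_inP => -[i iA xy]; exists i; rewrite // orbC.
Qed.

Lemma n_lcE : n_lc rxn A = n_comp lnk (complexes_of rxn A).
Proof.
apply: eq_n_comp => x y; apply/idP/idP; last exact: connect1.
exact: (connect_sub (fun _ _ => id)).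
Qed.

Lemma left_kernel_const (u : 'rV[F]_nc) : u *m M^T = 0 ->
  forall x y, connect lnk x y -> u 0 x = u 0 y.
Proof.
move=> uM0 x y xy; apply/eqP; rewrite eq_sym.
have cl : closed lnk [pred z | u 0 z == u 0 x].
  move=> a b /exists_inP[i iA ab].
  have := congr1 (fun w : 'rV_nr => w 0 i) uM0.
  rewrite /= incidence_mulmx iA mxE.
  move=> /eqP; rewrite subr_eq0 => /eqP uab; rewrite !inE.
  by case/orP: ab => /eqP rxni; move: uab; rewrite rxni /= => ->.
by have := closed_connect cl xy; rewrite !inE eqxx => <-.
Qed.

Lemma link_reaction i : i \in A -> lnk (rxn i).1 (rxn i).2.
Proof.
by move=> iA; apply/exists_inP; exists i; rewrite // -surjective_pairing eqxx.
Qed.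

(* The representatives of the classes of lnk, isolated complexes included. *)
Definition class_roots : {set 'I_nc} := [set x | roots lnk x].

Lemma root_in_class_roots x : fingraph.root lnk x \in class_roots.
Proof. by rewrite inE; apply: (roots_root link_sym). Qed.

Definition class_mx : 'M[F]_(#|class_roots|, nc) :=
  \matrix_(k, j) (fingraph.root lnk j == enum_val k)%:R.

Lemma class_mx_ker : (class_mx == kermx M^T)%MS.
Proof.
apply/andP; split.
  apply/row_subP => k; apply/sub_kermxP/rowP => i.
  rewrite incidence_mulmx !mxE; case: ifP => // iA.
  have/(fingraph.rootP link_sym) -> : connect lnk (rxn i).2 (rxn i).1.
    by rewrite link_sym; apply/connect1/link_reaction.
  by rewrite subrr.
apply/row_subP => r.
have : row r (kermx M^T) *m M^T = 0 by apply/sub_kermxP; rewrite row_sub.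
move: (row r _) => u uM0.
pose c : 'rV[F]_#|class_roots| := \row_k u 0 (enum_val k).
suff -> : u = c *m class_mx by apply: submxMl.
apply/rowP => j; rewrite !mxE.
pose k0 := enum_rank_in (root_in_class_roots j) (fingraph.root lnk j).
have k0E : enum_val k0 = fingraph.root lnk j.
  by rewrite enum_rankK_in ?root_in_class_roots.
rewrite (bigD1 k0) //= !mxE k0E eqxx mulr1 big1 ?addr0.
  by apply: left_kernel_const; rewrite // connect_root.
move=> k nk; rewrite !mxE -k0E (inj_eq enum_val_inj) eq_sym (negbTE nk).
by rewrite mulr0.
Qed.

(* class_mx has a right inverse, so its rows are independent. *)
Lemma rank_class_mx : \rank class_mx = #|class_roots|.
Proof.
pose S : 'M[F]_(nc, #|class_roots|) := \matrix_(j, k) (j == enum_val k)%:R.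
have SK : class_mx *m S = 1%:M.
  apply/matrixP => k k'; rewrite !mxE; under eq_bigr do rewrite !mxE.
  rewrite sum_mul_delta; have := enum_valP k'; rewrite inE => /eqP ->.
  by rewrite (inj_eq enum_val_inj) eq_sym.
apply/eqP; rewrite eqn_leq rank_leq_row /=.
by rewrite -{1}(mxrank1 F #|class_roots|) -SK mxrankM_maxl.
Qed.

(* Complexes outside the subnetwork are isolated, hence their own classes. *)
Lemma card_class_roots : #|class_roots| = (n_lc rxn A + (nc - n_cx rxn A))%N.
Proof.
set C := complexes_of rxn A.
have notC_roots x : x \notin C -> roots lnk x.
  move=> xC; apply/eqP/(connect_isolated _ (connect_root _ x)) => z.
  apply: contra xC => /exists_inP[i iA /orP[] /eqP rxni]; rewrite /C inE;
    by apply/exists_inP; exists i; rewrite // rxni eqxx ?orbT.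
have rootsC : #|predI (roots lnk) (mem [predC C])| = #|[predC C]|.
  apply: eq_card => x; rewrite !inE andb_idl // => xC.
  by apply: notC_roots; rewrite /C inE.
have rootsT : #|class_roots| = #|predI (roots lnk) (mem 'I_nc)|.
  by apply: eq_card => x; rewrite !inE andbT.
have := n_compC C lnk; rewrite -n_lcE /n_comp_mem -rootsT rootsC.
by have := cardC C; rewrite card_ord /n_cx -/C; lia.
Qed.

Lemma rk_incidence : rk incidence_vec A = (n_cx rxn A - n_lc rxn A)%N.
Proof.
have := mxrank_ker M^T; rewrite -(eqmx_rank class_mx_ker) rank_class_mx.
rewrite card_class_roots mxrank_tr -/(rk incidence_vec A).
have := rank_leq_col M; rewrite -/(rk incidence_vec A).
have ncx : (n_cx rxn A <= nc)%N.
  by rewrite /n_cx -[X in (_ <= X)%N]card_ord max_card.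
have lcx : (n_lc rxn A <= n_cx rxn A)%N.
  by rewrite n_lcE /n_comp_mem /n_cx; apply/subset_leq_card/subsetP => x /andP[].
by lia.
Qed.

End IncidenceRank.

Definition stoich_vec (R : realFieldType) (ns nc nr : nat)
    (comp : 'I_nc -> 'rV[R]_ns) (rxn : 'I_nr -> 'I_nc * 'I_nc) (i : 'I_nr) :
    'rV[R]_ns :=
  comp (rxn i).2 - comp (rxn i).1.

(* Independence of a decomposition is rank additivity of the stoichiometric
   vectors: the block subspaces always sum to S, so the sum is direct iff the
   dimensions add up. *)
Lemma independent_rank_additive (R : realFieldType) (ns nc nr : nat)
    (comp : 'I_nc -> 'rV[R]_ns) (rxn : 'I_nr -> 'I_nc * 'I_nc)
    (P : {set {set 'I_nr}}) : decomposition P ->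
  independent comp rxn P = rank_additive (stoich_vec comp rxn) P.
Proof.
move=> decP; rewrite /independent mxdirectE /=.
set v := stoich_vec comp rxn.
have sumP : (<<span_mx v [set: 'I_nr]>> == \sum_(B in P) <<span_mx v B>>)%MS.
  apply/andP; split.
    by rewrite genmxE span_mx_cover ?(cover_partition decP).
  by apply/sumsmx_subP => B _; rewrite !genmxE span_mxS ?subsetT.
rewrite [stoich_space _ _ _]/= sumP /= -(eqmx_rank sumP) mxrank_gen.
rewrite /rank_additive eq_sym; congr (_ == _)%N.
by apply: eq_bigr => B _; rewrite mxrank_gen.
Qed.

Lemma incidence_independent_rank_additive (F : fieldType) (nc nr : nat)
    (rxn : 'I_nr -> 'I_nc * 'I_nc) (P : {set {set 'I_nr}}) :
  incidence_independent rxn P = rank_additive (@incidence_vec F nc nr rxn) P.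
Proof.
rewrite /incidence_independent /rank_additive rk_incidence eq_sym.
by congr (_ == _)%N; apply: eq_bigr => B _; rewrite rk_incidence.
Qed.

Lemma num_decomps_finest (F : fieldType) (nr m : nat) (v : 'I_nr -> 'rV[F]_m)
    (prop : {set {set 'I_nr}} -> bool) (Pf : {set {set 'I_nr}}) :
  (forall Q, decomposition Q -> prop Q = rank_additive v Q) -> finest prop Pf ->
  num_decomps prop = bell #|Pf|.
Proof.
move=> propE [decPf propPf minPf].
have finPf : finest (rank_additive v) Pf.
  split; rewrite -?propE //.
  by move=> Q decQ; rewrite -propE //; apply: minPf.
rewrite /num_decomps -card_parts -(card_coarsenings decPf).
apply: eq_card => Q; rewrite !inE; case decQ: (decomposition Q) => //=.
by rewrite propE // (rank_additive_iff_coarser finPf).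
Qed.

Theorem mainTheorem3 (R : realFieldType) (ns nc nr : nat)
  (comp : 'I_nc -> 'rV[R]_ns) (rxn : 'I_nr -> 'I_nc * 'I_nc)
  (Pind Pinc : {set {set 'I_nr}}) :
  is_crn comp rxn ->
  finest (independent comp rxn) Pind ->
  finest (incidence_independent rxn) Pinc ->
  (2 <= #|Pind|)%N -> (2 <= #|Pinc|)%N ->
  num_decomps (independent comp rxn) = bell #|Pind| /\
  num_decomps (incidence_independent rxn) = bell #|Pinc|.
Proof.
move=> _ finInd finInc _ _; split.
  apply: num_decomps_finest finInd => Q decQ.
  exact: independent_rank_additive.
apply: (num_decomps_finest (v := @incidence_vec R nc nr rxn)) finInc => Q _.
exact: incidence_independent_rank_additive.
Qed.
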